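(* Let $k\geq 1$ and $n\geq 2$ be integers, let $\Omega>0$, $0<\sigma\leq m_{\min}$, and set \[ \tau=\frac{e^{-1}}{\Omega}\Big(\frac{\sigma}{m_{\min}}\Big)^{\frac{1}{2n-1}}. \] Then there exist a positive discrete measure $\mu=\sum_{j=1}^{n}a_j \delta_{\mathbf y_j}$ on $\mathbb R^k$ (all $a_j>0$) whose $n$ supports are the points $\big(-(n-\tfrac12)\tau+2m\tau,0,\dots,0\big)\in\mathbb R^k$, $m=0,1,\dots,n-1$, and a positive discrete measure $\hat \mu=\sum_{j=1}^{n}\hat a_j \delta_{\hat{\mathbf y}_j}$ on $\mathbb R^k$ (all $\hat a_j>0$) whose $n$ supports are the points $\big(-(n-\tfrac32)\tau+2m\tau,0,\dots,0\big)\in\mathbb R^k$, $m=0,1,\dots,n-1$, such that \[ \max_{\boldsymbol\omega\in\mathbb R^k,\ \|\boldsymbol\omega\|_2\leq\Omega}\big|\mathcal F[\hat \mu](\boldsymbol\omega)- \mathcal F[\mu](\boldsymbol\omega)\big|< \sigma, \qquad \min_{1\leq j\leq n}|a_j|= m_{\min}. \]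
   Context: For a discrete measure $\nu=\sum_{j} c_j\delta_{\mathbf x_j}$ on $\mathbb R^k$, its Fourier transform is $\mathcal F[\nu](\boldsymbol\omega)=\sum_j c_j e^{i \mathbf x_j\cdot\boldsymbol\omega}$, $\boldsymbol\omega\in\mathbb R^k$. Here $\Omega>0$ is the cutoff frequency, $\sigma>0$ the noise level and $m_{\min}>0$ a prescribed minimal amplitude. *)

From Stdlib Require Import Reals Lra.
From Coquelicot Require Import Coquelicot.
Open Scope R_scope.

(* Vectors of R^k are represented as functions nat -> R, of which only the
   coordinates 0..k-1 are used. *)

Fixpoint dotk (k : nat) (x w : nat -> R) : R :=
  match k with
  | O => 0
  | S k' => dotk k' x w + x k' * w k'
  end.

Definition norm2k (k : nat) (w : nat -> R) : R := sqrt (dotk k w w).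

Definition cexpi (t : R) : C := (cos t, sin t).

Fixpoint fourier_disc (k n : nat) (c : nat -> R) (x : nat -> nat -> R)
    (w : nat -> R) : C :=
  match n with
  | O => 0%C
  | S n' => Cplus (fourier_disc k n' c x w)
                  (Cmult (RtoC (c n')) (cexpi (dotk k (x n') w)))
  end.

Definition first_axis (t : R) : nat -> R := fun i => if Nat.eqb i 0 then t else 0.

From Stdlib Require Import Reals Lra Lia.
From Coquelicot Require Import Coquelicot.
Open Scope R_scope.

(* Put N = 2n - 1 and split the measure  m_min sum_{j <= N} C(N, j) delta_{s + j tau}
   (on the first axis, s = -(n - 1/2) tau) according to the parity of j: the even
   part is mu, the odd part is mu-hat, and the smallest amplitude is m_min C(N, 0).
   By the binomial theorem the difference of their Fourier transforms is
   -m_min e^{i s w} (1 - e^{i tau w})^N, whose modulus is at most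
   m_min (tau Omega)^N = e^{-N} sigma < sigma, since the chord |1 - e^{i t}| is at
   most the arc |t|. *)

Lemma Rabs_sin_le (x : R) : Rabs (sin x) <= Rabs x.
Proof.
  destruct (MVT_abs sin cos 0 x) as (c & Hc & _).
  { intros c _; apply derivable_pt_lim_sin. }
  rewrite sin_0, !Rminus_0_r in Hc; rewrite Hc.
  pose proof (COS_bound c); pose proof (Rabs_pos x).
  assert (Rabs (cos c) <= 1) by (apply Rabs_le; lra).
  nra.
Qed.

Lemma cexpi_add (s t : R) : cexpi (s + t) = (cexpi s * cexpi t)%C.
Proof.
  unfold cexpi; apply injective_projections; simpl; rewrite ?cos_plus, ?sin_plus; ring.
Qed.

Lemma cexpi_INR_mult (j : nat) (t : R) : cexpi (INR j * t) = (cexpi t ^ j)%C.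
Proof.
  induction j as [|j IH].
  - unfold cexpi; rewrite Rmult_0_l, cos_0, sin_0; reflexivity.
  - rewrite S_INR, Rmult_plus_distr_r, Rmult_1_l, Rplus_comm, cexpi_add, IH.
    reflexivity.
Qed.

Lemma Cmod_cexpi (t : R) : Cmod (cexpi t) = 1.
Proof.
  unfold Cmod, cexpi; simpl.
  transitivity (sqrt 1); [f_equal | apply sqrt_1].
  pose proof (sin2_cos2 t); unfold Rsqr in *; lra.
Qed.

Lemma Cmod_1_sub_cexpi_le (t : R) : Cmod (1 - cexpi t)%C <= Rabs t.
Proof.
  assert (Hchord : Cmod (1 - cexpi t)%C = 2 * Rabs (sin (t / 2))).
  { unfold Cmod, cexpi; simpl.
    set (u := t / 2); replace t with (2 * u) by (unfold u; field).
    rewrite cos_2a_sin, sin_2a.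
    replace (2 * Rabs (sin u)) with (Rabs (2 * sin u))
      by (rewrite Rabs_mult, Rabs_right; lra).
    rewrite <- sqrt_Rsqr_abs; f_equal.
    pose proof (sin2_cos2 u); unfold Rsqr in *; nra. }
  rewrite Hchord.
  pose proof (Rabs_sin_le (t / 2)) as Hsin.
  rewrite Rabs_div, (Rabs_right 2) in Hsin by lra.
  lra.
Qed.

Fixpoint Csum (f : nat -> C) (n : nat) : C :=
  match n with
  | O => 0%C
  | S n' => (Csum f n' + f n')%C
  end.

Lemma Csum_S (f : nat -> C) (n : nat) : Csum f (S n) = (Csum f n + f n)%C.
Proof. reflexivity. Qed.

Lemma Csum_ext (f g : nat -> C) (n : nat) :
  (forall j, f j = g j) -> Csum f n = Csum g n.
Proof. intros Hfg; induction n as [|n IH]; simpl; [reflexivity | now rewrite IH, Hfg]. Qed.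

Lemma Csum_mult_l (a : C) (f : nat -> C) (n : nat) :
  Csum (fun j => a * f j)%C n = (a * Csum f n)%C.
Proof. induction n as [|n IH]; simpl; [ring | rewrite IH; ring]. Qed.

Lemma Binomial_C_ge_1 (n k : nat) : (k <= n)%nat -> 1 <= Binomial.C n k.
Proof.
  revert k; induction n as [|n IH]; intros [|k] Hk.
  - rewrite C_n_0; lra.
  - lia.
  - rewrite C_n_0; lra.
  - destruct (Nat.eq_dec k n) as [-> | Hkn].
    + rewrite C_n_n; lra.
    + rewrite <- pascal by lia.
      pose proof (IH k ltac:(lia)); pose proof (IH (S k) ltac:(lia)); lra.
Qed.

Section ComplexBinomial.

Variable z : C.

Let binom_sum (N M : nat) : C := Csum (fun j => RtoC (Binomial.C N j) * z ^ j)%C M.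

Let binom_sum_S (N M : nat) :
  binom_sum N (S M) = (binom_sum N M + RtoC (Binomial.C N M) * z ^ M)%C.
Proof. reflexivity. Qed.

(* Pascal's rule only holds below the diagonal: for [j > N] the value of
   [Binomial.C N j] is junk, so partial sums are compared only up to [N]. *)
Lemma binom_sum_pascal (N M : nat) : (M <= N)%nat ->
  binom_sum (S N) (S M) = (binom_sum N (S M) + z * binom_sum N M)%C.
Proof.
  induction M as [|M IH]; intros HM.
  - unfold binom_sum; simpl; rewrite !C_n_0; ring.
  - rewrite (binom_sum_S (S N) (S M)), IH by lia.
    rewrite !(binom_sum_S N (S M)), (binom_sum_S N M).
    rewrite <- pascal by lia; rewrite RtoC_plus; simpl; ring.
Qed.

Lemma Cbinomial (N : nat) : binom_sum N (S N) = ((1 + z) ^ N)%C.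
Proof.
  induction N as [|N IH].
  - unfold binom_sum; simpl; rewrite C_n_0; ring.
  - rewrite binom_sum_S, binom_sum_pascal, (Cpow_S (1 + z)), <- IH by lia.
    rewrite (binom_sum_S N N), !C_n_n; simpl; ring.
Qed.

End ComplexBinomial.

Lemma dotk_first_axis (k : nat) (t : R) (w : nat -> R) :
  dotk (S k) (first_axis t) w = t * w 0%nat.
Proof.
  induction k as [|k IH].
  - unfold first_axis; simpl; ring.
  - change (dotk (S (S k)) (first_axis t) w)
      with (dotk (S k) (first_axis t) w + first_axis t (S k) * w (S k)).
    rewrite IH; unfold first_axis; simpl; ring.
Qed.

Lemma Rabs_le_norm2k (k : nat) (w : nat -> R) : (1 <= k)%nat -> Rabs (w 0%nat) <= norm2k k w.
Proof.
  intros Hk; unfold norm2k; rewrite <- sqrt_Rsqr_abs; apply sqrt_le_1_alt.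
  destruct k as [|k]; [lia|]; clear Hk; unfold Rsqr.
  induction k as [|k IH]; simpl in *; nra.
Qed.

Lemma Cpow_m1_even (m : nat) : ((- 1) ^ (2 * m) = 1)%C.
Proof. rewrite Cpow_mult_r; replace ((- 1) ^ 2)%C with (RtoC 1) by ring; apply Cpow_1_l. Qed.

Lemma fourier_disc_ext (k n : nat) (c c' : nat -> R) (x x' : nat -> nat -> R) (w : nat -> R) :
  (forall j, c j = c' j) -> (forall j, x j = x' j) ->
  fourier_disc k n c x w = fourier_disc k n c' x' w.
Proof. intros Hc Hx; induction n as [|n IH]; simpl; [reflexivity | now rewrite IH, Hc, Hx]. Qed.

Lemma fourier_disc_odd_sub_even (k n : nat) (b : nat -> R) (x : nat -> nat -> R) (w : nat -> R) :
  Cminus (fourier_disc k n (fun m => b (2 * m + 1)%nat) (fun m => x (2 * m + 1)%nat) w)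
         (fourier_disc k n (fun m => b (2 * m)%nat) (fun m => x (2 * m)%nat) w) =
  (- Csum (fun j => (- 1) ^ j * RtoC (b j) * cexpi (dotk k (x j) w)) (2 * n))%C.
Proof.
  induction n as [|n IH].
  - unfold Cminus; simpl; ring.
  - replace (2 * S n)%nat with (S (S (2 * n))) by lia.
    rewrite !Csum_S; cbn [fourier_disc].
    replace (S (2 * n)) with (2 * n + 1)%nat by lia.
    rewrite Cpow_add_r, Cpow_1_r, Cpow_m1_even.
    assert (Hsplit : forall A a B b' : C, Cminus (A + a) (B + b') = (Cminus A B + Cminus a b')%C)
      by (intros; unfold Cminus; ring).
    rewrite Hsplit, IH; unfold Cminus; ring.
Qed.

Lemma Cmod_fourier_disc_binomial_gap (k n : nat) (mu s h : R) (w : nat -> R) :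
  (1 <= k)%nat -> (1 <= n)%nat -> 0 <= mu ->
  Cmod (Cminus
    (fourier_disc k n (fun m => mu * Binomial.C (2 * n - 1) (2 * m + 1))
                      (fun m => first_axis (s + INR (2 * m + 1) * h)) w)
    (fourier_disc k n (fun m => mu * Binomial.C (2 * n - 1) (2 * m))
                      (fun m => first_axis (s + INR (2 * m) * h)) w)) =
  mu * Cmod (1 - cexpi (h * w 0%nat))%C ^ (2 * n - 1).
Proof.
  intros Hk Hn Hmu; destruct k as [|k]; [lia|].
  set (b j := mu * Binomial.C (2 * n - 1) j).
  set (x j := first_axis (s + INR j * h)).
  change (Cmod (Cminus
    (fourier_disc (S k) n (fun m => b (2 * m + 1)%nat) (fun m => x (2 * m + 1)%nat) w)
    (fourier_disc (S k) n (fun m => b (2 * m)%nat) (fun m => x (2 * m)%nat) w)) =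
    mu * Cmod (1 - cexpi (h * w 0%nat))%C ^ (2 * n - 1)).
  rewrite fourier_disc_odd_sub_even.
  set (z := cexpi (h * w 0%nat)).
  assert (Hterm : forall j,
    ((- 1) ^ j * RtoC (b j) * cexpi (dotk (S k) (x j) w))%C =
    (RtoC mu * cexpi (s * w 0%nat) * (RtoC (Binomial.C (2 * n - 1) j) * (- z) ^ j))%C).
  { intros j; unfold b, x.
    rewrite dotk_first_axis, Rmult_plus_distr_r, cexpi_add, Rmult_assoc, cexpi_INR_mult.
    replace (- z)%C with (- 1 * z)%C by ring.
    rewrite Cpow_mult_l, RtoC_mult; fold z; ring. }
  rewrite (Csum_ext _ _ _ Hterm), Csum_mult_l.
  set (N := (2 * n - 1)%nat); replace (2 * n)%nat with (S N) by (unfold N; lia).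
  rewrite Cbinomial, Cmod_opp, !Cmod_mult, Cmod_R, Cmod_cexpi, Cmod_pow, Rabs_right by lra.
  unfold Cminus; ring.
Qed.

Lemma Rpower_inv_pow (x : R) (N : nat) : 0 < x -> (1 <= N)%nat ->
  Rpower x (1 / INR N) ^ N = x.
Proof.
  intros Hx HN.
  assert (HNpos : 0 < INR N) by (apply lt_0_INR; lia).
  rewrite <- Rpower_pow by apply exp_pos.
  rewrite Rpower_mult; replace (1 / INR N * INR N) with 1 by (field; lra).
  apply Rpower_1, Hx.
Qed.

Lemma binomial_gap_lt (N : nat) (Omega sigma mu t : R) :
  (1 <= N)%nat -> 0 < Omega -> 0 < sigma -> sigma <= mu -> Rabs t <= Omega ->
  let tau := exp (-1) / Omega * Rpower (sigma / mu) (1 / INR N) in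
  mu * Cmod (1 - cexpi (tau * t))%C ^ N < sigma.
Proof.
  intros HN HO Hs Hsm Ht tau.
  set (r := Rpower (sigma / mu) (1 / INR N)).
  assert (Hr : 0 < r) by apply exp_pos.
  assert (Htau : 0 < tau) by (unfold tau; fold r; pose proof (exp_pos (-1));
    apply Rmult_lt_0_compat; [apply Rdiv_lt_0_compat|]; lra).
  assert (Hchord : Cmod (1 - cexpi (tau * t))%C <= exp (-1) * r).
  { eapply Rle_trans; [apply Cmod_1_sub_cexpi_le|].
    rewrite Rabs_mult, (Rabs_right tau) by lra.
    replace (exp (-1) * r) with (tau * Omega) by (unfold tau; fold r; field; lra).
    apply Rmult_le_compat_l; lra. }
  assert (He : exp (-1) ^ N < 1).
  { apply pow_lt_1_compat; [|lia].
    split; [left; apply exp_pos | rewrite <- exp_0; apply exp_increasing; lra]. }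
  apply Rle_lt_trans with (mu * (exp (-1) * r) ^ N).
  { apply Rmult_le_compat_l; [lra|].
    apply pow_incr; split; [apply Cmod_ge_0 | exact Hchord]. }
  rewrite Rpow_mult_distr; unfold r.
  rewrite Rpower_inv_pow; [| apply Rdiv_lt_0_compat; lra | exact HN].
  replace (mu * (exp (-1) ^ N * (sigma / mu))) with (exp (-1) ^ N * sigma) by (field; lra).
  nra.
Qed.

Theorem theorem3p4 (k n : nat) (Omega sigma m_min : R) :
  (1 <= k)%nat -> (2 <= n)%nat ->
  0 < Omega -> 0 < sigma -> sigma <= m_min ->
  let tau := exp (-1) / Omega * Rpower (sigma / m_min) (1 / (2 * INR n - 1)) in
  exists a ahat : nat -> R,
    (forall j, (j < n)%nat -> 0 < a j) /\
    (forall j, (j < n)%nat -> 0 < ahat j) /\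
    let y := fun m => first_axis (- (INR n - 1/2) * tau + 2 * INR m * tau) in
    let yhat := fun m => first_axis (- (INR n - 3/2) * tau + 2 * INR m * tau) in
    (forall w : nat -> R, norm2k k w <= Omega ->
       Cmod (Cminus (fourier_disc k n ahat yhat w) (fourier_disc k n a y w)) < sigma) /\
    ((forall j, (j < n)%nat -> m_min <= Rabs (a j)) /\
     exists j, (j < n)%nat /\ Rabs (a j) = m_min).
Proof.
  intros Hk Hn HO Hs Hsm tau.
  set (N := (2 * n - 1)%nat).
  assert (HN : INR N = 2 * INR n - 1).
  { unfold N; rewrite minus_INR, mult_INR by lia; simpl; ring. }
  set (b j := m_min * Binomial.C N j).
  assert (Hb : forall j, (j <= N)%nat -> m_min <= b j).
  { intros j Hj; pose proof (Binomial_C_ge_1 N j Hj); unfold b; nra. }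
  exists (fun m => b (2 * m)%nat), (fun m => b (2 * m + 1)%nat).
  split; [intros j Hj; pose proof (Hb (2 * j)%nat ltac:(unfold N; lia)); lra|].
  split; [intros j Hj; pose proof (Hb (2 * j + 1)%nat ltac:(unfold N; lia)); lra|].
  intros y yhat; split; [|split].
  - intros w Hw.
    set (s := - (INR n - 1 / 2) * tau).
    rewrite (fourier_disc_ext k n _ _ y (fun m => first_axis (s + INR (2 * m) * tau)) w
               (fun _ => eq_refl))
      by (intros; unfold y, s; rewrite mult_INR; simpl; apply f_equal; field).
    rewrite (fourier_disc_ext k n _ _ yhat (fun m => first_axis (s + INR (2 * m + 1) * tau)) w
               (fun _ => eq_refl))
      by (intros; unfold yhat, s; rewrite plus_INR, mult_INR; simpl; apply f_equal; field).
    unfold b; rewrite Cmod_fourier_disc_binomial_gap by lia || lra.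
    unfold tau; rewrite <- HN.
    apply binomial_gap_lt; try lia; try lra.
    eapply Rle_trans; [apply Rabs_le_norm2k, Hk | exact Hw].
  - intros j Hj; pose proof (Hb (2 * j)%nat ltac:(unfold N; lia)).
    rewrite Rabs_right; lra.
  - exists 0%nat; split; [lia|].
    unfold b; simpl; rewrite C_n_0, Rmult_1_r, Rabs_right; lra.
Qed.
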